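(* Let $\mathcal{O}$ be a proper $A$-order in a totally definite quaternion algebra $D$ over a totally real field $F$, and let $\widetilde A:=\mathrm{Nr}_A(\mathcal{O})$. Then $\widetilde A=A$ if and only if $\mathcal{O}$ is closed under the canonical involution $x\mapsto \mathrm{Tr}(x)-x$.
   Context: $A\subseteq O_F$ is a $\mathbb{Z}$-order; $\mathcal{O}$ is a proper $A$-order if $\mathcal{O}\cap F=A$. $\mathrm{Nr}$ and $\mathrm{Tr}$ are the reduced norm and trace of $D/F$. $\mathrm{Nr}_A(\mathcal{O})$ is the $A$-submodule of $F$ generated by $\{\mathrm{Nr}(x):x\in\mathcal{O}\}$; it is an order with $A\subseteq\widetilde A\subseteq O_F$. *)

From HB Require Import structures.
From mathcomp Require Import all_boot all_order all_algebra all_field.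
Set Implicit Arguments. Unset Strict Implicit. Unset Printing Implicit Defensive.
Import Order.TTheory GRing.Theory Num.Theory.
Local Open Scope ring_scope.

Definition totally_real (F : fieldExtType rat) : Prop :=
  forall (s : {rmorphism F -> algC}) (x : F), s x \is Num.real.

Definition integral_Z (F : fieldExtType rat) (x : F) : Prop :=
  exists p : {poly int}, p \is monic /\ root (map_poly (fun z : int => z%:~R) p) x.

(* A is a Z-order contained in O_F: a subring of O_F which is a finitely
   generated Z-module spanning F over Q. *)
Definition Zorder (F : fieldExtType rat) (A : F -> Prop) : Prop :=
  [/\ [/\ A 1,
      (forall x y, A x -> A y -> A (x - y)) &
      (forall x y, A x -> A y -> A (x * y))],
      (forall x, A x -> integral_Z x),
      (exists s : seq F, forall x, A x <->
          exists c : seq int, size c = size s /\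
                 x = \sum_(i < size s) s`_i *~ c`_i)
    & (forall x : F, exists n : nat, (0 < n)%N /\ A (n%:R * x))].

(* D = F + F i + F j + F k, i^2 = a, j^2 = b, k = ij = -ji. *)
Record quat (F : Type) := Quat { q0 : F; q1 : F; q2 : F; q3 : F }.

Section Quat.
Variables (F : fieldType) (a b : F).

Definition qzero : quat F := Quat 0 0 0 0.
Definition qone : quat F := Quat 1 0 0 0.
Definition qadd (x y : quat F) : quat F :=
  Quat (q0 x + q0 y) (q1 x + q1 y) (q2 x + q2 y) (q3 x + q3 y).
Definition qopp (x : quat F) : quat F := Quat (- q0 x) (- q1 x) (- q2 x) (- q3 x).
Definition qsub (x y : quat F) : quat F := qadd x (qopp y).
Definition qscal (c : F) (x : quat F) : quat F :=
  Quat (c * q0 x) (c * q1 x) (c * q2 x) (c * q3 x).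
Definition qmul (x y : quat F) : quat F :=
  Quat (q0 x * q0 y + a * q1 x * q1 y + b * q2 x * q2 y - a * b * q3 x * q3 y)
       (q0 x * q1 y + q1 x * q0 y - b * q2 x * q3 y + b * q3 x * q2 y)
       (q0 x * q2 y + q2 x * q0 y + a * q1 x * q3 y - a * q3 x * q1 y)
       (q0 x * q3 y + q3 x * q0 y + q1 x * q2 y - q2 x * q1 y).

Definition Nr (x : quat F) : F :=
  q0 x ^+ 2 - a * q1 x ^+ 2 - b * q2 x ^+ 2 + a * b * q3 x ^+ 2.
Definition Tr (x : quat F) : F := 2 * q0 x.

Definition canon_inv (x : quat F) : quat F := qsub (qscal (Tr x) qone) x.

Definition all_A (A : F -> Prop) (cs : seq F) : Prop := forall c, c \in cs -> A c.

Definition qsum (cs : seq F) (e : seq (quat F)) : quat F :=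
  foldr qadd qzero (map (fun p => qscal p.1 p.2) (zip cs e)).

(* O is an A-order in D: subring containing 1, an A-module, finitely
   generated over A, and spanning D over F (full lattice). *)
Definition Aorder (A : F -> Prop) (O : quat F -> Prop) : Prop :=
  [/\ [/\ O qone,
      (forall x y, O x -> O y -> O (qsub x y)) &
      (forall x y, O x -> O y -> O (qmul x y))],
      (forall c x, A c -> O x -> O (qscal c x)),
      (exists e : seq (quat F), forall x, O x <->
          exists cs : seq F, size cs = size e /\ all_A A cs /\ x = qsum cs e)
    & (forall x : quat F, exists n : nat, (0 < n)%N /\ O (qscal n%:R x))].

(* proper: O ∩ F = A (F embedded as scalars) *)
Definition proper_order (A : F -> Prop) (O : quat F -> Prop) : Prop :=
  forall f : F, O (qscal f qone) <-> A f.

Definition NrA (A : F -> Prop) (O : quat F -> Prop) (y : F) : Prop :=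
  exists (cs : seq F) (xs : seq (quat F)),
    [/\ size cs = size xs, all_A A cs,
         (forall i : 'I_(size xs), O (nth qzero xs i))
      & y = \sum_(i < size cs) cs`_i * Nr (nth qzero xs i)].

End Quat.

(* (a,b)_F is totally definite: ramified at every real place, i.e.
   sigma(a) < 0 and sigma(b) < 0 for every embedding sigma : F -> C
   (all of which are real, F being totally real). *)
Definition totally_definite (F : fieldExtType rat) (a b : F) : Prop :=
  [/\ a != 0, b != 0 &
   (forall s : {rmorphism F -> algC}, (s a < 0) /\ (s b < 0))].

From HB Require Import structures.
From mathcomp Require Import all_boot all_order all_algebra all_field.
From mathcomp Require Import ring.
Import Order.TTheory GRing.Theory Num.Theory.
Set Implicit Arguments. Unset Strict Implicit. Unset Printing Implicit Defensive.
Local Open Scope ring_scope.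

(* Since x * (Tr x - x) = Nr x, closure of O under the canonical involution
   puts every reduced norm of O into O ∩ F = A, so Nr_A(O) = A. Conversely,
   the polarization Tr x = Nr x + 1 - Nr (x - 1) shows that Nr_A(O) = A forces
   Tr x into A ⊆ O, hence Tr x - x into O. *)

Section QuatIdentities.
Variables (F : fieldType) (a b : F).

Lemma Nr_qone : Nr a b (qone F) = 1.
Proof. by rewrite /Nr /=; ring. Qed.

Lemma qmul_canon_inv (x : quat F) :
  qmul a b x (canon_inv x) = qscal (Nr a b x) (qone F).
Proof.
case: x => x0 x1 x2 x3.
rewrite /qmul /canon_inv /qsub /qadd /qopp /qscal /qone /Nr /Tr /=.
by congr Quat; ring.
Qed.

Lemma Tr_polar (x : quat F) :
  Tr x = Nr a b x + Nr a b (qone F) - Nr a b (qsub x (qone F)).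
Proof.
by case: x => x0 x1 x2 x3; rewrite /Nr /Tr /qsub /qadd /qopp /qone /=; ring.
Qed.

End QuatIdentities.

Section SubringPred.
Variables (R : pzRingType) (A : R -> Prop).
Hypotheses (A1 : A 1) (Asub : forall x y, A x -> A y -> A (x - y)).

Lemma subring_pred0 : A 0.
Proof. by rewrite -(subrr 1); apply: Asub. Qed.

Lemma subring_predN x : A x -> A (- x).
Proof. by move=> Ax; rewrite -sub0r; apply: Asub => //; apply: subring_pred0. Qed.

Lemma subring_predD x y : A x -> A y -> A (x + y).
Proof. by move=> Ax Ay; rewrite -[y]opprK; apply: Asub => //; apply: subring_predN. Qed.

End SubringPred.

Section NormModule.
Variables (F : fieldType) (a b : F) (A : F -> Prop) (O : quat F -> Prop).
Hypotheses (A1 : A 1) (Asub : forall x y, A x -> A y -> A (x - y))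
           (Amul : forall x y, A x -> A y -> A (x * y)) (O1 : O (qone F)).

Lemma NrA_Nr x : O x -> NrA a b A O (Nr a b x).
Proof.
move=> Ox; exists [:: 1], [:: x]; split => //.
- by move=> c; rewrite inE => /eqP ->.
- by case=> [[|]].
- by rewrite big_ord1 mul1r.
Qed.

Lemma NrA_of_A y : A y -> NrA a b A O y.
Proof.
move=> Ay; exists [:: y], [:: qone F]; split => //.
- by move=> c; rewrite inE => /eqP ->.
- by case=> [[|]].
- by rewrite big_ord1 /= Nr_qone mulr1.
Qed.

Lemma NrA_sub_of_Nr :
  (forall x, O x -> A (Nr a b x)) -> forall y, NrA a b A O y -> A y.
Proof.
move=> ANr _ [cs [xs [size_eq Acs Oxs ->]]].
apply: (big_ind A) => [|u v|i _]; first exact: subring_pred0.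
  exact: subring_predD.
apply: Amul; first by apply: Acs; apply: mem_nth.
by apply: ANr; have := Oxs (Ordinal (leq_trans (ltn_ord i) (eq_leq size_eq))).
Qed.

Lemma NrA_eq_iff_Nr_mem :
  (forall y, NrA a b A O y <-> A y) <-> (forall x, O x -> A (Nr a b x)).
Proof.
split=> [NrA_A x Ox | ANr y]; first exact/NrA_A/NrA_Nr.
by split; [apply: NrA_sub_of_Nr | apply: NrA_of_A].
Qed.

End NormModule.

Theorem mainTheorem6 (F : fieldExtType rat) (a b : F)
    (A : F -> Prop) (O : quat F -> Prop) :
  totally_real F ->
  totally_definite a b ->
  Zorder A ->
  Aorder a b A O ->
  proper_order A O ->
  ((forall y : F, NrA a b A O y <-> A y) <->
   (forall x : quat F, O x -> O (canon_inv x))).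
Proof.
move=> _ _ [[A1 Asub Amul] _ _ _] [[O1 Osub Omul] _ _ _] proper.
rewrite NrA_eq_iff_Nr_mem //; split=> [ANr x Ox | inv_closed x Ox].
- apply: (Osub) => //; apply/proper.
  rewrite (Tr_polar a b x); apply: (Asub); last exact/ANr/Osub.
  by apply: subring_predD => //; apply: ANr.
- by apply/proper; rewrite -qmul_canon_inv; apply/Omul/inv_closed.
Qed.
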